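(* Let $S$ be an intra-regular $\Gamma$-AG$^{**}$-groupoid. Then every two-sided $\Gamma$-ideal of $S$ is $\Gamma$-prime if and only if $S$ is $\Gamma$-totally ordered under inclusion, i.e. for any two-sided $\Gamma$-ideals $P,Q$ of $S$, either $P\subseteq Q$ or $Q\subseteq P$.
   Context: Let $S$ and $\Gamma$ be nonempty sets with a map $S\times\Gamma\times S\to S$, $(x,\gamma,y)\mapsto x\gamma y$. $S$ is a $\Gamma$-AG-groupoid if $(x\gamma y)\delta z=(z\gamma y)\delta x$ for all $x,y,z\in S$, $\gamma,\delta\in\Gamma$; it is a $\Gamma$-AG$^{**}$-groupoid if moreover $a\alpha(b\beta c)=b\alpha(a\beta c)$ for all $a,b,c\in S$, $\alpha,\beta\in\Gamma$. For subsets $A,B\subseteq S$, $A\Gamma B=\{a\gamma b: a\in A,\gamma\in\Gamma,b\in B\}$. $S$ is intra-regular if for every $a\in S$ there exist $x,y\in S$ and $\beta,\gamma,\delta\in\Gamma$ with $a=(x\beta(a\delta a))\gamma y$. A nonempty subset $A$ is a two-sided $\Gamma$-ideal if $S\Gamma A\subseteq A$ and $A\Gamma S\subseteq A$. A two-sided $\Gamma$-ideal $P$ is $\Gamma$-prime if for all two-sided $\Gamma$-ideals $A,B$ of $S$, $A\Gamma B\subseteq P$ implies $A\subseteq P$ or $B\subseteq P$. *)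

Definition gamma_AG {S G : Type} (op : S -> G -> S -> S) : Prop :=
  forall (x y z : S) (g d : G), op (op x g y) d z = op (op z g y) d x.

Definition gamma_AGss {S G : Type} (op : S -> G -> S -> S) : Prop :=
  gamma_AG op /\
  forall (a b c : S) (al be : G), op a al (op b be c) = op b al (op a be c).

Definition intra_regular {S G : Type} (op : S -> G -> S -> S) : Prop :=
  forall a : S, exists (x y : S) (b g d : G), a = op (op x b (op a d a)) g y.

Definition gprod {S G : Type} (op : S -> G -> S -> S) (A B : S -> Prop) : S -> Prop :=
  fun s => exists (a : S) (g : G) (b : S), A a /\ B b /\ s = op a g b.

Definition subset {S : Type} (A B : S -> Prop) : Prop := forall x, A x -> B x.

Definition two_sided_ideal {S G : Type} (op : S -> G -> S -> S) (A : S -> Prop) : Prop :=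
  (exists a, A a) /\
  subset (gprod op (fun _ => True) A) A /\
  subset (gprod op A (fun _ => True)) A.

Definition gamma_prime {S G : Type} (op : S -> G -> S -> S) (P : S -> Prop) : Prop :=
  two_sided_ideal op P /\
  forall A B : S -> Prop, two_sided_ideal op A -> two_sided_ideal op B ->
    subset (gprod op A B) P -> subset A P \/ subset B P.

Definition gamma_totally_ordered {S G : Type} (op : S -> G -> S -> S) : Prop :=
  forall P Q : S -> Prop, two_sided_ideal op P -> two_sided_ideal op Q ->
    subset P Q \/ subset Q P.


(* Intra-regularity makes every two-sided ideal semiprime: writing
   a = (x b (a d a)) g y, the factor a d a lies in A Γ A, so a lies in any
   ideal containing A Γ A.  Hence if the ideals are totally ordered, A Γ B ⊆ P
   forces A Γ A ⊆ P or B Γ B ⊆ P.  Conversely, for ideals P and Q the product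
   P Γ Q lies in the ideal P ∩ Q, and primeness of P ∩ Q compares P with Q. *)

Section GammaIdeals.

Variables (S G : Type) (op : S -> G -> S -> S).

Definition meet (A B : S -> Prop) : S -> Prop := fun s => A s /\ B s.

Lemma gprod_monotone (A A' B B' : S -> Prop) :
  subset A A' -> subset B B' -> subset (gprod op A B) (gprod op A' B').
Proof.
  intros HA HB s [a [g [b [Aa [Bb ->]]]]].
  exists a, g, b. auto.
Qed.

Lemma ideal_gprod_l (P A : S -> Prop) :
  two_sided_ideal op P -> subset (gprod op A P) P.
Proof.
  intros [_ [PL _]] s [a [g [b [_ [Pb ->]]]]].
  apply PL. exists a, g, b. auto.
Qed.

Lemma ideal_gprod_r (P B : S -> Prop) :
  two_sided_ideal op P -> subset (gprod op P B) P.
Proof.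
  intros [_ [_ PR]] s [a [g [b [Pa [_ ->]]]]].
  apply PR. exists a, g, b. auto.
Qed.

Lemma gprod_subset_meet (P Q : S -> Prop) :
  two_sided_ideal op P -> two_sided_ideal op Q ->
  subset (gprod op P Q) (meet P Q).
Proof.
  intros HP HQ s Hs. split.
  - exact (ideal_gprod_r P Q HP s Hs).
  - exact (ideal_gprod_l Q P HQ s Hs).
Qed.

Lemma two_sided_ideal_meet (g0 : G) (P Q : S -> Prop) :
  two_sided_ideal op P -> two_sided_ideal op Q ->
  two_sided_ideal op (meet P Q).
Proof.
  intros HP HQ. split; [|split].
  - destruct (proj1 HP) as [p Pp]. destruct (proj1 HQ) as [q Qq].
    exists (op p g0 q). apply (gprod_subset_meet P Q HP HQ).
    exists p, g0, q. auto.
  - intros s [a [g [b [_ [[Pb Qb] ->]]]]]. split.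
    + apply (ideal_gprod_l P (fun _ => True) HP). exists a, g, b. auto.
    + apply (ideal_gprod_l Q (fun _ => True) HQ). exists a, g, b. auto.
  - intros s [a [g [b [[Pa Qa] [_ ->]]]]]. split.
    + apply (ideal_gprod_r P (fun _ => True) HP). exists a, g, b. auto.
    + apply (ideal_gprod_r Q (fun _ => True) HQ). exists a, g, b. auto.
Qed.

Lemma intra_regular_semiprime (P A : S -> Prop) :
  intra_regular op -> two_sided_ideal op P ->
  subset (gprod op A A) P -> subset A P.
Proof.
  intros Hir HP HAA a Aa.
  destruct (Hir a) as [x [y [b [g [d ->]]]]].
  apply (ideal_gprod_r P (fun _ => True) HP).
  exists (op x b (op a d a)), g, y. repeat split.
  apply (ideal_gprod_l P (fun _ => True) HP).
  exists x, b, (op a d a). repeat split.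
  apply HAA. exists a, d, a. auto.
Qed.

Lemma intra_regular_totally_ordered_prime (P : S -> Prop) :
  intra_regular op -> gamma_totally_ordered op ->
  two_sided_ideal op P -> gamma_prime op P.
Proof.
  intros Hir Htot HP. split; [exact HP|].
  intros A B HA HB HAB.
  destruct (Htot A B HA HB) as [AB | BA].
  - left. apply (intra_regular_semiprime P A Hir HP).
    intros s Hs. apply HAB.
    revert Hs. apply gprod_monotone; intros ? ?; auto.
  - right. apply (intra_regular_semiprime P B Hir HP).
    intros s Hs. apply HAB.
    revert Hs. apply gprod_monotone; intros ? ?; auto.
Qed.

Lemma all_prime_totally_ordered (g0 : G) :
  (forall P : S -> Prop, two_sided_ideal op P -> gamma_prime op P) ->
  gamma_totally_ordered op.
Proof.
  intros Hprime P Q HP HQ.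
  destruct (Hprime (meet P Q) (two_sided_ideal_meet g0 P Q HP HQ))
    as [_ Hmeet].
  destruct (Hmeet P Q HP HQ (gprod_subset_meet P Q HP HQ)) as [PQ | QP].
  - left. intros x Px. exact (proj2 (PQ x Px)).
  - right. intros x Qx. exact (proj1 (QP x Qx)).
Qed.

End GammaIdeals.

Theorem mainTheorem18 (S G : Type) (s0 : S) (g0 : G) (op : S -> G -> S -> S)
  (HAG : gamma_AGss op) (Hir : intra_regular op) :
  (forall P : S -> Prop, two_sided_ideal op P -> gamma_prime op P) <->
  gamma_totally_ordered op.
Proof.
  split.
  - exact (all_prime_totally_ordered S G op g0).
  - intros Htot P HP.
    exact (intra_regular_totally_ordered_prime S G op P Hir Htot HP).
Qed.
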